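(* Let $I$ be a fuzzy implication function and $T$ a t-norm, and suppose $I$ satisfies the ordering property: $I(x,y)=1\iff x\le y$, for all $x,y\in[0,1]$. Then $I$ satisfies the monotonicity of the generalized modus ponens with respect to $T$ (i.e. $T(\tilde x,I(\tilde x,y))\le T(x,I(x,y))$ for all $x,\tilde x,y\in[0,1]$ with $\tilde x\le x$) if and only if, for every $y\in[0,1)$, the function $f_y:[y,1]\to[0,1]$, $f_y(x)=T(x,I(x,y))$, is increasing.
   Context: A fuzzy implication function is a map $I:[0,1]^2\to[0,1]$ decreasing in the first variable, increasing in the second, with $I(0,0)=I(1,1)=1$, $I(1,0)=0$. A t-norm is a commutative, associative binary operation on $[0,1]$, increasing in both variables, with neutral element $1$. ''Increasing'' means non-decreasing. *)

(* real numbers R; functions on [0,1] represented as total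
   functions R -> R -> R whose axioms are required only on [0,1]. *)
From Stdlib Require Import Reals.
Open Scope R_scope.

Definition in01 (x : R) : Prop := 0 <= x <= 1.

Definition fuzzy_implication (I : R -> R -> R) : Prop :=
  (forall x y, in01 x -> in01 y -> in01 (I x y)) /\
  (forall x1 x2 y, in01 x1 -> in01 x2 -> in01 y -> x1 <= x2 -> I x2 y <= I x1 y) /\
  (forall x y1 y2, in01 x -> in01 y1 -> in01 y2 -> y1 <= y2 -> I x y1 <= I x y2) /\
  I 0 0 = 1 /\ I 1 1 = 1 /\ I 1 0 = 0.

Definition t_norm (T : R -> R -> R) : Prop :=
  (forall x y, in01 x -> in01 y -> in01 (T x y)) /\
  (forall x y, in01 x -> in01 y -> T x y = T y x) /\
  (forall x y z, in01 x -> in01 y -> in01 z -> T x (T y z) = T (T x y) z) /\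
  (forall x1 x2 y, in01 x1 -> in01 x2 -> in01 y -> x1 <= x2 -> T x1 y <= T x2 y) /\
  (forall x y1 y2, in01 x -> in01 y1 -> in01 y2 -> y1 <= y2 -> T x y1 <= T x y2) /\
  (forall x, in01 x -> T x 1 = x).

Definition ordering_property (I : R -> R -> R) : Prop :=
  forall x y, in01 x -> in01 y -> (I x y = 1 <-> x <= y).

Definition monotone_GMP (I T : R -> R -> R) : Prop :=
  forall x xt y, in01 x -> in01 xt -> in01 y -> xt <= x ->
    T xt (I xt y) <= T x (I x y).

Definition f_y_increasing (I T : R -> R -> R) (y : R) : Prop :=
  forall x1 x2, y <= x1 -> x1 <= x2 -> x2 <= 1 ->
    T x1 (I x1 y) <= T x2 (I x2 y).

(* Only the ordering property of I and the neutrality of 1 for T matter.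
   For x <= y the ordering property gives I(x,y) = 1, hence T(x, I(x,y)) = x.
   So for xt <= y the left side of the GMP inequality is xt, which is bounded
   by x when x <= y, and by f_y(y) = y <= f_y(x) when y < x; for y < xt both
   points lie in [y,1], where f_y is increasing. *)
From Stdlib Require Import Reals Lra.
Open Scope R_scope.

Definition one_right_neutral (T : R -> R -> R) : Prop :=
  forall x, in01 x -> T x 1 = x.

Lemma t_norm_one_right_neutral (T : R -> R -> R) :
  t_norm T -> one_right_neutral T.
Proof. now intros (_ & _ & _ & _ & _ & HT1). Qed.

Lemma modus_ponens_le (I T : R -> R -> R) (x y : R) :
  ordering_property I -> one_right_neutral T ->
  in01 x -> in01 y -> x <= y -> T x (I x y) = x.
Proof.
  intros Hord HT1 Hx Hy Hxy.
  assert (HI : I x y = 1) by now apply Hord.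
  rewrite HI; exact (HT1 x Hx).
Qed.

Lemma monotone_GMP_f_y_increasing (I T : R -> R -> R) (y : R) :
  monotone_GMP I T -> 0 <= y -> f_y_increasing I T y.
Proof.
  intros Hgmp Hy x1 x2 Hyx1 Hx12 Hx2.
  apply Hgmp; unfold in01; lra.
Qed.

Lemma f_y_increasing_monotone_GMP (I T : R -> R -> R) :
  ordering_property I -> one_right_neutral T ->
  (forall y, 0 <= y < 1 -> f_y_increasing I T y) -> monotone_GMP I T.
Proof.
  intros Hord HT1 Hf x xt y Hx Hxt Hy Hxtx.
  destruct (Rle_or_lt xt y) as [Hxty | Hyxt].
  - rewrite (modus_ponens_le I T xt y) by assumption.
    destruct (Rle_or_lt x y) as [Hxy | Hyx].
    + rewrite (modus_ponens_le I T x y) by assumption; exact Hxtx.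
    + assert (Hfy : T y (I y y) <= T x (I x y))
        by (apply Hf; unfold in01 in *; lra).
      rewrite (modus_ponens_le I T y y) in Hfy by (auto; lra).
      lra.
  - apply (Hf y); unfold in01 in *; lra.
Qed.

Theorem proposition10 (I T : R -> R -> R) :
  fuzzy_implication I -> t_norm T -> ordering_property I ->
  (monotone_GMP I T <-> (forall y, 0 <= y < 1 -> f_y_increasing I T y)).
Proof.
  intros _ HT Hord.
  split.
  - intros Hgmp y Hy.
    exact (monotone_GMP_f_y_increasing I T y Hgmp (proj1 Hy)).
  - exact (f_y_increasing_monotone_GMP I T Hord (t_norm_one_right_neutral T HT)).
Qed.
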